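(* If $T$ is a tree with $n$ vertices that contains a perfect matching and has maximum degree $\Delta(T)=3$, then $\nu_{2}(T) \geq \frac{3n-2}{4}$.
   Context: $\nu_2(T)$ is the maximum number of edges of a $2$-edge-colorable subgraph of $T$, i.e. the maximum total size of two edge-disjoint matchings of $T$. *)

From mathcomp Require Import all_boot.
Set Implicit Arguments. Unset Strict Implicit. Unset Printing Implicit Defensive.

Section Graph.
Variable T : finType.
Variable e : rel T.

Definition simple_graph := irreflexive e /\ symmetric e.

Definition edges : {set {set T}} :=
  [set E : {set T} | [exists x, exists y, e x y && (E == [set x; y])]].

(* tree: connected and acyclic, equivalently (for a finite nonempty graph)
   connected with |E| = |V| - 1 *)
Definition is_tree :=
  0 < #|T| /\ (forall x y : T, connect e x y) /\ #|edges| = #|T| - 1.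

Definition deg (x : T) : nat := #|[set y | e x y]|.

Definition max_degree : nat := \max_(x : T) deg x.

Definition matching (M : {set {set T}}) :=
  (M \subset edges) &&
  [forall E1 in M, forall E2 in M, (E1 != E2) ==> [disjoint E1 & E2]].

Definition perfect_matching (M : {set {set T}}) :=
  matching M && [forall x, exists E in M, x \in E].

Definition has_perfect_matching := exists M, perfect_matching M.

Definition two_matchings (P : {set {set T}} * {set {set T}}) :=
  [&& matching P.1, matching P.2 & [disjoint P.1 & P.2]].

Definition nu2 : nat :=
  \max_(P : {set {set T}} * {set {set T}} | two_matchings P) (#|P.1| + #|P.2|).

End Graph.

From mathcomp Require Import all_boot.
From mathcomp Require Import zify.
Set Implicit Arguments. Unset Strict Implicit. Unset Printing Implicit Defensive.

(* Let M be the perfect matching, so 2|M| = n.  Every vertex meets exactly one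
   edge of M and at most three edges in all, so the remaining n - 1 - |M| edges
   form a subforest of maximum degree 2, i.e. a union of paths.  Repeatedly taking
   the edge at a leaf and deleting the (at most two) edges at its other end gives
   a matching N in it with 2|N| >= n - 1 - |M|.  Hence
   4 nu2 >= 4|M| + 4|N| >= 2n + 2(n - 1 - n/2) = 3n - 2. *)

Section EdgeSets.
Variables (T : finType) (e : rel T).
Hypothesis sg : simple_graph e.

Definition edge_deg (F : {set {set T}}) (x : T) := #|[set E in F | x \in E]|.

Lemma edgesP (E : {set T}) :
  reflect (exists x y, e x y /\ E = [set x; y]) (E \in edges e).
Proof.
rewrite inE; apply: (iffP existsP) => [[x /existsP[y /andP[exy /eqP ->]]]|].
  by exists x, y.
by case=> x [y [exy ->]]; exists x; apply/existsP; exists y; rewrite exy eqxx.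
Qed.

Lemma edge_card (E : {set T}) : E \in edges e -> #|E| = 2.
Proof.
case: sg => irr _ /edgesP[x [y [exy ->]]]; rewrite cards2.
by case: eqP => // xy; rewrite xy irr in exy.
Qed.

Lemma edge_at (E : {set T}) (x : T) :
  E \in edges e -> x \in E -> exists2 w, e x w & E = [set x; w].
Proof.
case: sg => _ sym /edgesP[a [b [eab ->]]]; rewrite !inE => /orP[] /eqP ->.
  by exists b.
by exists a; rewrite 1?sym // setUC.
Qed.

Lemma sum_edge_deg (F : {set {set T}}) :
  F \subset edges e -> \sum_x edge_deg F x = 2 * #|F|.
Proof.
move=> sF; have degE x : edge_deg F x = \sum_(E in F) (x \in E).
  by rewrite /edge_deg -sum1_card big_mkcond [RHS]big_mkcond; apply: eq_bigr => E _;
    rewrite inE; case: (E \in F); case: (x \in E).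
rewrite (eq_bigr _ (fun x _ => degE x)) exchange_big (eq_bigr (fun _ => 2)).
  by rewrite sum_nat_const mulnC.
move=> E EF; rewrite -(edge_card (subsetP sF _ EF)) -sum1_card [RHS]big_mkcond.
by apply: eq_bigr => x _; case: (x \in E).
Qed.

Lemma edge_deg_le_deg (x : T) : edge_deg (edges e) x <= deg e x.
Proof.
apply: leq_trans (leq_imset_card (fun y => [set x; y]) _).
apply/subset_leq_card/subsetP => E; rewrite inE => /andP[Ee xE].
by have [w exw ->] := edge_at Ee xE; apply/imsetP; exists w; rewrite ?inE.
Qed.

Lemma deg_le_max_degree (x : T) : deg e x <= max_degree e.
Proof. exact: leq_bigmax. Qed.

Lemma edge_degS (A B : {set {set T}}) (x : T) :
  A \subset B -> edge_deg A x <= edge_deg B x.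
Proof.
move=> sAB; apply/subset_leq_card/subsetP => E.
by rewrite !inE => /andP[/(subsetP sAB) -> ->].
Qed.

Lemma edge_degD (A B : {set {set T}}) (x : T) :
  B \subset A -> edge_deg (A :\: B) x + edge_deg B x = edge_deg A x.
Proof.
move=> sBA; rewrite /edge_deg -(cardsID B [set E in A | x \in E]) addnC.
congr (_ + _); apply: eq_card => E; rewrite !inE; have := subsetP sBA E.
  by case: (E \in B) (E \in A) (x \in E) => [] [] [] // /(_ isT).
by case: (E \in B) (E \in A) (x \in E) => [] [] [].
Qed.

Lemma matchingP (F : {set {set T}}) :
  reflect (F \subset edges e /\
           {in F &, forall E1 E2 : {set T}, E1 != E2 -> [disjoint E1 & E2]})
          (matching e F).
Proof.
apply: (iffP andP) => [[sF /forallP dF]|[sF dF]]; split=> //.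
  move=> E1 E2 E1F E2F; move/forallP: (implyP (dF E1) E1F) => /(_ E2).
  by rewrite E2F /= => /implyP.
apply/forallP => E1; apply/implyP => E1F; apply/forallP => E2; apply/implyP => E2F.
exact/implyP/dF.
Qed.

Lemma matching_set0 : matching e set0.
Proof. by apply/matchingP; rewrite sub0set; split=> // E; rewrite inE. Qed.

Lemma perfect_matching_edge_deg (M : {set {set T}}) (x : T) :
  perfect_matching e M -> edge_deg M x = 1.
Proof.
case/andP => /matchingP[_ dM] /forallP/(_ x)/existsP[E /andP[EM xE]].
apply/eqP/cards1P; exists E; apply/setP => E'; rewrite !inE.
apply/andP/eqP => [[E'M xE']|->]; last by [].
apply/eqP/negPn/negP => /(dM _ _ E'M EM); rewrite -setI_eq0 => /set0Pn[].
by exists x; rewrite inE xE xE'.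
Qed.

Lemma perfect_matching_card (M : {set {set T}}) :
  perfect_matching e M -> 2 * #|M| = #|T|.
Proof.
move=> pM; have /andP[/matchingP[sM _] _] := pM.
rewrite -(sum_edge_deg sM) (eq_bigr (fun _ => 1)) ?sum1_card // => x _.
exact: perfect_matching_edge_deg.
Qed.

Lemma leq_nu2 (P : {set {set T}} * {set {set T}}) :
  two_matchings e P -> #|P.1| + #|P.2| <= nu2 e.
Proof.
exact: (@leq_bigmax_cond _ _ (fun Q : {set {set T}} * {set {set T}} => #|Q.1| + #|Q.2|)).
Qed.

End EdgeSets.

Section Trees.
Variables (T : finType) (e : rel T).

Definition induced_edges (S : {set T}) := [set E in edges e | E \subset S].

Lemma mem_induced_edges (S E : {set T}) :
  (E \in induced_edges S) = (E \in edges e) && (E \subset S).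
Proof. by rewrite inE. Qed.

Lemma connect_cross (S : {set T}) x y :
  connect e x y -> x \in S -> y \notin S -> exists a b, [/\ e a b, a \in S & b \notin S].
Proof.
case/connectP => p; elim: p x => [|z p IH] x /=; first by move=> _ -> ->.
case/andP => exz pz yl xS yS; case zS: (z \in S); first exact: IH pz yl zS yS.
by exists x, z; rewrite zS.
Qed.

(* Each vertex outside a nonempty S can be charged to a distinct edge leaving the
   part of the graph already reached, growing S one vertex at a time. *)
Lemma induced_edges_card (S : {set T}) :
  (forall x y, connect e x y) -> S != set0 ->
  #|induced_edges S| + #|~: S| <= #|edges e|.
Proof.
move=> conn; move: {2}#|~: S| (erefl #|~: S|) => k; elim: k S => [|k IH] S hk S0.
  by rewrite hk addn0; apply/subset_leq_card/subsetP => E; rewrite inE => /andP[].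
have [y yS] : exists y, y \in ~: S by apply/card_gt0P; rewrite hk.
have [x0 x0S] := set0Pn _ S0; rewrite inE in yS.
have [a [b [eab aS bS]]] := connect_cross (conn x0 y) x0S yS.
have hk' : #|~: (b |: S)| = k.
  by have := cardsC (b |: S); have := cardsC S; rewrite cardsU1 bS; lia.
have /IH := hk'; have -> : b |: S != set0 by apply/set0Pn; exists b; rewrite setU11.
move=> /(_ isT); apply: leq_trans; rewrite hk -hk' addnS ltn_add2r.
apply: proper_card; apply/properP; split.
  apply/subsetP => E; rewrite !mem_induced_edges => /andP[-> /subset_trans->] //.
  exact: subsetU1.
have ab_edge : [set a; b] \in edges e by apply/edgesP; exists a, b.
exists [set a; b]; rewrite !mem_induced_edges ab_edge subUset !sub1set.
  by rewrite !inE eqxx aS orbT.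
by rewrite (negbTE bS) andbF.
Qed.

Hypotheses (sg : simple_graph e) (tr : is_tree e).

(* Otherwise F meets at most |F| vertices, whereas a nonempty vertex set U of a
   tree spans at most |U| - 1 edges. *)
Lemma tree_edges_has_leaf (F : {set {set T}}) :
  F \subset edges e -> F != set0 -> exists x, edge_deg F x = 1.
Proof.
move=> sF F0; have [_ [conn cardE]] := tr.
have [/existsP[x /eqP]|/existsPn no_leaf] := boolP [exists x, edge_deg F x == 1].
  by exists x.
exfalso.
pose U := [set x | 0 < edge_deg F x].
have UF : 2 * #|U| <= 2 * #|F|.
  rewrite -(sum_edge_deg sg sF) -sum1_card big_distrr big_mkcond.
  by apply: leq_sum => x _; rewrite inE; move: (no_leaf x); case: edge_deg => [|[|]].
have FU : F \subset induced_edges U.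
  apply/subsetP => E EF; rewrite inE (subsetP sF _ EF); apply/subsetP => y yE.
  by rewrite inE; apply/card_gt0P; exists E; rewrite inE EF yE.
have U0 : U != set0.
  have [E EF] := set0Pn _ F0; have /edgesP[x [y [_ Exy]]] := subsetP sF _ EF.
  apply/set0Pn; exists x; rewrite inE; apply/card_gt0P; exists E.
  by rewrite inE EF Exy setU11.
have := induced_edges_card conn U0; have := subset_leq_card FU.
have := cardsC U; move: U0; rewrite -card_gt0; lia.
Qed.

Lemma leaf_edge_disjoint (F : {set {set T}}) (x w : T) (E : {set T}) :
  edge_deg F x = 1 -> [set x; w] \in F -> E \in F -> w \notin E ->
  [disjoint [set x; w] & E].
Proof.
move/eqP/cards1P => -[E0 hE0] xwF EF wE.
have xE : x \notin E.
  apply: contraNN wE => xE; have : E \in [set E in F | x \in E] by rewrite inE EF xE.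
  have : [set x; w] \in [set E in F | x \in E] by rewrite inE xwF set21.
  by rewrite hE0 !inE => /eqP <- /eqP ->; exact: set22.
by rewrite disjoints_subset subUset !sub1set !inE xE.
Qed.

Lemma deg2_subforest_matching (F : {set {set T}}) :
  F \subset edges e -> (forall x, edge_deg F x <= 2) ->
  exists2 N, matching e N & N \subset F /\ #|F| <= 2 * #|N|.
Proof.
move: {2}#|F| (leqnn #|F|) => k; elim: k F => [|k IH] F hk sF degF.
  by exists set0; rewrite ?matching_set0 // sub0set; split=> //; lia.
have [->|F0] := eqVneq F set0.
  by exists set0; rewrite ?matching_set0 // sub0set cards0.
have [x leaf] := tree_edges_has_leaf sF F0.
have [E0 E0F xE0] : exists2 E0, E0 \in F & x \in E0.
  have /card_gt0P[E0] : 0 < edge_deg F x by rewrite leaf.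
  by rewrite inE => /andP[]; exists E0.
have [w _ E0xw] := edge_at sg (subsetP sF _ E0F) xE0; subst E0.
pose F' := F :\: [set E : {set T} | w \in E].
have degw : edge_deg F w + #|F'| = #|F|.
  rewrite -(cardsID [set E : {set T} | w \in E] F); congr (_ + _).
  by apply: eq_card => E; rewrite !inE andbC.
have wF : 0 < edge_deg F w by apply/card_gt0P; exists [set x; w]; rewrite inE E0F set22.
have ltF' : #|F'| < #|F| by rewrite -degw -addn1 addnC leq_add2r.
have sF'F : F' \subset F by apply: subsetDl.
have [N mN [sNF' cN]] := IH F' (leq_trans ltF' hk) (subset_trans sF'F sF)
  (fun y => leq_trans (edge_degS y sF'F) (degF y)).
have [sN dN] := matchingP _ _ mN.
have xwN : [set x; w] \notin N.
  by apply/negP => /(subsetP sNF'); rewrite in_setD inE set22.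
have disj E : E \in N -> [disjoint [set x; w] & E].
  move/(subsetP sNF'); rewrite !inE => /andP[wE EF].
  exact: leaf_edge_disjoint leaf E0F EF wE.
exists ([set x; w] |: N); last first.
  rewrite cardsU1 xwN subUset sub1set E0F (subset_trans sNF' sF'F); split=> //.
  by have := degF w; lia.
apply/matchingP; split; first by rewrite subUset sub1set (subsetP sF) ?sN.
move=> E1 E2; rewrite !in_setU1 => /orP[/eqP->|E1N] /orP[/eqP->|E2N];
  rewrite ?eqxx // => ne12.
- exact: disj.
- by rewrite disjoint_sym disj.
- exact: dN ne12.
Qed.

End Trees.

Theorem corollary2 (T : finType) (e : rel T) :
  simple_graph e -> is_tree e -> has_perfect_matching e -> max_degree e = 3 ->
  3 * #|T| <= 4 * nu2 e + 2.
Proof.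
move=> sg tr [M pM] maxdeg; have /andP[/matchingP[sM _] _] := pM.
have degF x : edge_deg (edges e :\: M) x <= 2.
  have := edge_degD x sM; rewrite (perfect_matching_edge_deg x pM).
  have := leq_trans (edge_deg_le_deg sg x) (deg_le_max_degree e x); rewrite maxdeg; lia.
have [N mN [sNF cardN]] := deg2_subforest_matching sg tr (subsetDl _ _) degF.
have MN : two_matchings e (M, N).
  rewrite /two_matchings /= mN; have /andP[-> _] := pM.
  by rewrite disjoint_sym disjoints_subset (subset_trans sNF) // setDE subsetIr.
have := leq_nu2 MN; have := perfect_matching_card sg pM; have [_ [_ cardE]] := tr.
have := cardsD (edges e) M; rewrite (setIidPr sM) cardE /=; move: cardN.
set n := #|T|; set m := #|M|; set k := #|N|; set f := #|_ :\: _|.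
clearbody n m k f; lia.
Qed.
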